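(* Let $a_1,\dots,a_k$ be positive integers with $\gcd(a_1,\dots,a_k)=1$, let $\mathit{NR}$ be the finite set of positive integers that are not representable, let $a$ be one of the $a_i$, let $\mathcal{N}$ be the set of positive integers $n$ such that $n$ is representable and $n-a$ is not, and let $\mathcal{N}_0=\mathcal{N}\cup\{0\}$. Then for all complex $z\neq 0$ with $e^{az}\neq1$, \[ \sum_{n\in\mathit{NR}}e^{nz}=\frac{1}{e^{az}-1}\sum_{n\in\mathcal{N}_0}e^{nz}-\frac{1}{e^z-1}, \] and, writing $S_m=\sum_{n\in\mathit{NR}}n^m$, for every integer $m\ge1$, \[ mS_{m-1}=a^{m-1}\sum_{n\in\mathcal{N}_0}B_m(n/a)-B_m . \]
   Context: An integer $n$ is representable if $n=\sum_i a_ix_i$ with all $x_i$ nonnegative integers. $B_m(x)$ denotes the Bernoulli polynomials, defined by $\frac{te^{tx}}{e^t-1}=\sum_{m\ge0}B_m(x)\frac{t^m}{m!}$, and $B_m=B_m(0)$ are the Bernoulli numbers. *)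

From Stdlib Require Import Reals List.
From Coquelicot Require Import Coquelicot.
Import ListNotations.

Definition Cexp (z : C) : C :=
  (exp (Re z) * cos (Im z), exp (Re z) * sin (Im z))%R.

Definition gcd_list (l : list nat) : nat := fold_right Nat.gcd 0%nat l.

(* n = sum_i a_i x_i with x_i nonnegative integers *)
Definition representable (as_ : list nat) (n : nat) : Prop :=
  exists xs : list nat, length xs = length as_ /\
    n = fold_right (fun p acc => (fst p * snd p + acc)%nat) 0%nat (combine as_ xs).

Definition NRset (as_ : list nat) (n : nat) : Prop :=
  (0 < n)%nat /\ ~ representable as_ n.

(* Nset0 = {n > 0 : n representable, n - a not representable (as an integer)} U {0};
   for n < a, n - a < 0 is never representable. *)
Definition Nset0 (as_ : list nat) (a n : nat) : Prop :=
  n = 0%nat \/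
  ((0 < n)%nat /\ representable as_ n /\ ~ ((a <= n)%nat /\ representable as_ (n - a))).

Definition enumerates (l : list nat) (P : nat -> Prop) : Prop :=
  NoDup l /\ forall n, In n l <-> P n.

Definition Csum_list (l : list nat) (f : nat -> C) : C :=
  fold_right (fun n acc => Cplus (f n) acc) (RtoC 0) l.
Definition Rsum_list (l : list nat) (f : nat -> R) : R :=
  fold_right (fun n acc => (f n + acc)%R) 0%R l.

(* Bernoulli numbers B_0..B_n via the recurrence sum_{k=0}^{m} C(m+1,k) B_k = 0 (m>=1),
   B_0 = 1 (equivalent to t/(e^t-1) = sum B_m t^m/m!, so B_1 = -1/2). *)
Fixpoint bern_list (n : nat) : list R :=
  match n with
  | O => [1%R]
  | S n' => let l := bern_list n' in
      l ++ [(- / INR (S n) * sum_f_R0 (fun k => Binomial.C (S n) k * nth k l 0) n')%R]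
  end.

Definition bernoulli (m : nat) : R := nth m (bern_list m) 0%R.

Definition bernoulli_poly (m : nat) (x : R) : R :=
  sum_f_R0 (fun k => Binomial.C m k * bernoulli k * x ^ (m - k))%R m.

(* The representable numbers form a numerical semigroup S with finitely many gaps NR (as the
   generators are coprime), and N0 is the Apery set of a in S.  Since n not in S forces n - a not
   in S, "n < a or n - a is a gap" holds exactly when n is in N0 or is a gap, so N0 and NR
   together are [0, a) and NR + a.  Summing f over both sides gives
     sum_{N0} f = sum_{k < a} f k + sum_{NR} (f (n + a) - f n).
   For f n = e^(nz) this is the first identity after summing a geometric series.  For
   f n = B_m(n/a) it is the second, by B_m(x + 1) - B_m(x) = m x^(m-1) and Raabe's formula
   a^(m-1) sum_{k < a} B_m((x + k)/a) = B_m(x) at x = 0; both follow by induction on m from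
   B_m' = m B_(m-1). *)

From Stdlib Require Import Reals List Permutation Lia Lra Classical ClassicalEpsilon.
From Coquelicot Require Import Coquelicot.
Import ListNotations.

Open Scope R_scope.

Lemma representable_nil n : representable [] n <-> n = 0%nat.
Proof.
  split.
  - intros [[|y ys] [Hl Hn]]; [exact Hn | discriminate].
  - intros ->. exists []. split; reflexivity.
Qed.

Lemma representable_cons x l n :
  representable (x :: l) n <-> exists y r, representable l r /\ n = (x * y + r)%nat.
Proof.
  split.
  - intros [[|y ys] [Hl Hn]]; [discriminate|].
    eexists y, _. split; [|exact Hn]. exists ys. split; [simpl in Hl; lia | reflexivity].
  - intros [y [r [[ys [Hl Hr]] ->]]]. exists (y :: ys). split; [simpl; lia|].
    simpl. rewrite Hr. reflexivity.
Qed.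

Lemma representable_0 l : representable l 0.
Proof.
  induction l as [|x l IH]; [apply representable_nil; reflexivity|].
  apply representable_cons. exists 0%nat, 0%nat. split; [exact IH | lia].
Qed.

Lemma representable_add l n m :
  representable l n -> representable l m -> representable l (n + m).
Proof.
  revert n m; induction l as [|x l IH]; intros n m Hn Hm.
  - apply representable_nil in Hn, Hm. apply representable_nil. lia.
  - apply representable_cons in Hn as [y1 [r1 [H1 ->]]].
    apply representable_cons in Hm as [y2 [r2 [H2 ->]]].
    apply representable_cons. exists (y1 + y2)%nat, (r1 + r2)%nat.
    split; [apply IH; assumption | lia].
Qed.

Lemma representable_mul l k n : representable l n -> representable l (k * n).
Proof.
  intros Hn. induction k as [|k IH]; [apply representable_0|].
  apply representable_add; assumption.
Qed.

Lemma representable_cons_r x l n : representable l n -> representable (x :: l) n.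
Proof. intros Hn. apply representable_cons. exists 0%nat, n. split; [exact Hn | lia]. Qed.

Lemma representable_In l x : In x l -> representable l x.
Proof.
  induction l as [|y l IH]; intros Hx; [destruct Hx|].
  destruct Hx as [->|Hx].
  - apply representable_cons. exists 1%nat, 0%nat. split; [apply representable_0 | lia].
  - apply representable_cons_r, IH, Hx.
Qed.

Lemma representable_gcd_gap l :
  exists p q, representable l p /\ representable l q /\ p = (q + gcd_list l)%nat.
Proof.
  induction l as [|x l [p [q [Hp [Hq Hpq]]]]].
  - exists 0%nat, 0%nat. repeat split; apply representable_0.
  - simpl gcd_list. set (g := gcd_list l) in *.
    destruct (Nat.eq_dec g 0) as [Hg|Hg].
    + rewrite Hg, Nat.gcd_0_r. exists x, 0%nat.
      repeat split; [apply representable_In; left; reflexivity | apply representable_0].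
    + destruct (Nat.gcd_bezout_pos g x) as [u [v Huv]]; [lia|].
      rewrite Nat.gcd_comm in Huv.
      exists (u * p)%nat, (v * x + u * q)%nat. repeat split.
      * apply representable_cons_r, representable_mul, Hp.
      * apply representable_add.
        -- apply representable_mul, representable_In. left; reflexivity.
        -- apply representable_cons_r, representable_mul, Hq.
      * rewrite Hpq. nia.
Qed.

Lemma representable_large l :
  gcd_list l = 1%nat -> exists N, forall n, (N <= n)%nat -> representable l n.
Proof.
  intros Hg. destruct (representable_gcd_gap l) as [p [q [Hp [Hq Hpq]]]].
  rewrite Hg in Hpq. exists (q * q)%nat. intros n Hn.
  destruct (Nat.eq_dec q 0) as [Hq0|Hq0].
  - replace n with (n * p)%nat by nia. apply representable_mul, Hp.
  - (* write n = d q + r with r < q <= d, so n = (d - r) q + r (q + 1) *)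
    pose proof (Nat.div_mod n q Hq0). pose proof (Nat.mod_upper_bound n q Hq0).
    assert (Hd : (q <= n / q)%nat) by (apply Nat.div_le_lower_bound; lia).
    replace n with ((n / q - n mod q) * q + n mod q * p)%nat by nia.
    apply representable_add; apply representable_mul; assumption.
Qed.

Lemma NRset_iff l n : NRset l n <-> ~ representable l n.
Proof.
  split; [intros [_ Hn]; exact Hn|]. intros Hn. split; [|exact Hn].
  destruct n; [contradiction (representable_0 l) | lia].
Qed.

Lemma NRset_lt l N n :
  (forall k, (N <= k)%nat -> representable l k) -> NRset l n -> (n < N)%nat.
Proof.
  intros HN [_ Hn]. destruct (Nat.lt_ge_cases n N) as [H|H]; [exact H|].
  contradiction (HN n H).
Qed.

Lemma enumerates_bounded (P : nat -> Prop) N :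
  (forall n, P n -> (n < N)%nat) -> exists l, enumerates l P.
Proof.
  intros HN.
  exists (filter (fun n => if excluded_middle_informative (P n) then true else false) (seq 0 N)).
  split; [apply NoDup_filter, seq_NoDup|]. intros n. rewrite filter_In, in_seq.
  destruct (excluded_middle_informative (P n)) as [Hn|Hn].
  - specialize (HN n Hn). split; [tauto | intros _; split; [lia | reflexivity]].
  - split; [intros [_ H]; discriminate | contradiction].
Qed.

Lemma fold_right_Permutation {A B : Type} (g : A -> B -> B) (z : B) (l l' : list A) :
  (forall x y b, g x (g y b) = g y (g x b)) ->
  Permutation l l' -> fold_right g z l = fold_right g z l'.
Proof. intros Hg Hp. induction Hp; simpl; congruence. Qed.

Lemma Rsum_list_app l1 l2 f : Rsum_list (l1 ++ l2) f = Rsum_list l1 f + Rsum_list l2 f.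
Proof. induction l1 as [|n l1 IH]; simpl; [|rewrite IH]; ring. Qed.

Lemma Rsum_list_map l h f : Rsum_list (map h l) f = Rsum_list l (fun n => f (h n)).
Proof. induction l as [|n l IH]; simpl; [|rewrite IH]; reflexivity. Qed.

Lemma Rsum_list_ext l f g : (forall n, f n = g n) -> Rsum_list l f = Rsum_list l g.
Proof. intros Hfg. induction l as [|n l IH]; simpl; [|rewrite IH, Hfg]; reflexivity. Qed.

Lemma Rsum_list_plus l f g :
  Rsum_list l (fun n => f n + g n) = Rsum_list l f + Rsum_list l g.
Proof. induction l as [|n l IH]; simpl; [|rewrite IH]; ring. Qed.

Lemma Rsum_list_scal l c f : Rsum_list l (fun n => c * f n) = c * Rsum_list l f.
Proof. induction l as [|n l IH]; simpl; [|rewrite IH]; ring. Qed.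

Lemma Rsum_list_Permutation l l' f : Permutation l l' -> Rsum_list l f = Rsum_list l' f.
Proof. apply fold_right_Permutation. intros; ring. Qed.

Lemma Rsum_list_seq_telescope n (h : nat -> R) :
  Rsum_list (seq 0 n) (fun k => h (S k)) - Rsum_list (seq 0 n) h = h n - h 0%nat.
Proof.
  induction n as [|n IH]; [simpl; ring|].
  rewrite !seq_S, !Rsum_list_app. simpl. lra.
Qed.

Lemma Rsum_list_seq_1 n : Rsum_list (seq 0 n) (fun _ => 1) = INR n.
Proof.
  induction n as [|n IH]; [reflexivity|].
  rewrite seq_S, Rsum_list_app, IH, S_INR. simpl. ring.
Qed.

Lemma Csum_list_app l1 l2 f :
  Csum_list (l1 ++ l2) f = (Csum_list l1 f + Csum_list l2 f)%C.
Proof. induction l1 as [|n l1 IH]; simpl; [|rewrite IH]; ring. Qed.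

Lemma Csum_list_map l h f : Csum_list (map h l) f = Csum_list l (fun n => f (h n)).
Proof. induction l as [|n l IH]; simpl; [|rewrite IH]; reflexivity. Qed.

Lemma Csum_list_ext l f g : (forall n, f n = g n) -> Csum_list l f = Csum_list l g.
Proof. intros Hfg. induction l as [|n l IH]; simpl; [|rewrite IH, Hfg]; reflexivity. Qed.

Lemma Csum_list_scal l c f : Csum_list l (fun n => c * f n)%C = (c * Csum_list l f)%C.
Proof. induction l as [|n l IH]; simpl; [|rewrite IH]; ring. Qed.

Lemma Csum_list_Permutation l l' f : Permutation l l' -> Csum_list l f = Csum_list l' f.
Proof. apply fold_right_Permutation. intros; ring. Qed.

Lemma bern_list_length n : length (bern_list n) = S n.
Proof. induction n as [|n IH]; [reflexivity|]. simpl. rewrite length_app, IH. simpl. lia. Qed.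

Lemma nth_bern_list n k : (k <= n)%nat -> nth k (bern_list n) 0 = bernoulli k.
Proof.
  induction n as [|n IH]; intros Hk.
  - replace k with 0%nat by lia. reflexivity.
  - destruct (Nat.eq_dec k (S n)) as [->|Hne]; [reflexivity|].
    simpl. rewrite app_nth1 by (rewrite bern_list_length; lia). apply IH. lia.
Qed.

Lemma bernoulli_recurrence n :
  sum_f_R0 (fun k => Binomial.C (S (S n)) k * bernoulli k) (S n) = 0.
Proof.
  assert (HB : bernoulli (S n) = - / INR (S (S n)) *
     sum_f_R0 (fun k => Binomial.C (S (S n)) k * bernoulli k) n).
  { unfold bernoulli at 1. simpl bern_list.
    rewrite app_nth2 by (rewrite bern_list_length; lia).
    rewrite bern_list_length, Nat.sub_diag. simpl nth. f_equal.
    apply sum_eq. intros k Hk. rewrite nth_bern_list by lia. reflexivity. }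
  assert (HC : Binomial.C (S (S n)) (S n) = INR (S (S n))).
  { rewrite pascal_step1 by lia. replace (S (S n) - S n)%nat with 1%nat by lia.
    rewrite pascal_step3, C_n_0 by lia. rewrite Nat.sub_0_r. simpl (INR 1). field. }
  rewrite tech5, HB, HC. field. apply not_0_INR. lia.
Qed.

Lemma bernoulli_poly_0 x : bernoulli_poly 0 x = 1.
Proof. unfold bernoulli_poly. simpl. rewrite C_n_0. unfold bernoulli. simpl. ring. Qed.

Lemma bernoulli_poly_at0 m : bernoulli_poly m 0 = bernoulli m.
Proof.
  unfold bernoulli_poly. destruct m as [|m]; [simpl; rewrite C_n_0; ring|].
  rewrite tech5, Nat.sub_diag, C_n_n, (sum_eq _ (fun _ => 0)), sum_cte.
  - simpl. ring.
  - intros k Hk. rewrite pow_i by lia. ring.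
Qed.

Lemma bernoulli_poly_at1 m :
  bernoulli_poly (S m) 1 - bernoulli_poly (S m) 0 = INR (S m) * 0 ^ m.
Proof.
  rewrite bernoulli_poly_at0. unfold bernoulli_poly.
  rewrite (sum_eq _ (fun k => Binomial.C (S m) k * bernoulli k)) by (intros; rewrite pow1; ring).
  destruct m as [|m].
  - simpl. rewrite C_n_0, C_n_n. unfold bernoulli. simpl. field.
  - rewrite tech5, bernoulli_recurrence, C_n_n, pow_i by lia. ring.
Qed.

Lemma is_derive_eq (f : R -> R) (x l l' : R) : is_derive f x l -> l = l' -> is_derive f x l'.
Proof. intros Hf <-. exact Hf. Qed.

Lemma is_derive_sum_f_R0 (f df : nat -> R -> R) n x :
  (forall k, is_derive (f k) x (df k x)) ->
  is_derive (fun y => sum_f_R0 (fun k => f k y) n) x (sum_f_R0 (fun k => df k x) n).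
Proof.
  intros Hf. induction n as [|n IH]; [apply Hf|].
  apply (is_derive_plus (fun y => sum_f_R0 (fun k => f k y) n) (f (S n))); auto.
Qed.

Lemma is_derive_Rsum_list (l : list nat) (f df : nat -> R -> R) x :
  (forall k, is_derive (f k) x (df k x)) ->
  is_derive (fun y => Rsum_list l (fun k => f k y)) x (Rsum_list l (fun k => df k x)).
Proof.
  intros Hf. induction l as [|k l IH]; [apply (is_derive_const 0)|].
  apply (is_derive_plus (f k) (fun y => Rsum_list l (fun k => f k y))); auto.
Qed.

Lemma is_derive_bernoulli_poly m x :
  is_derive (bernoulli_poly (S m)) x (INR (S m) * bernoulli_poly m x).
Proof.
  eapply is_derive_eq.
  { apply (is_derive_sum_f_R0 (fun k y => Binomial.C (S m) k * bernoulli k * y ^ (S m - k))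
      (fun k y => Binomial.C (S m) k * bernoulli k * (INR (S m - k) * y ^ pred (S m - k)))).
    intros k. apply is_derive_scal.
    eapply is_derive_eq; [apply (is_derive_pow (fun y => y) _ x 1 (is_derive_id x))|].
    simpl. ring. }
  rewrite tech5, Nat.sub_diag, Rmult_0_l, Rmult_0_r, Rplus_0_r.
  unfold bernoulli_poly. rewrite scal_sum. apply sum_eq. intros k Hk.
  replace (pred (S m - k)) with (m - k)%nat by lia.
  (* (m+1) C(m,k) = (m+1-k) C(m+1,k) *)
  rewrite pascal_step2 by lia. field. apply not_0_INR. lia.
Qed.

Lemma is_derive_bernoulli_poly_comp m (g : R -> R) x dg :
  is_derive g x dg ->
  is_derive (fun y => bernoulli_poly (S m) (g y)) x (INR (S m) * bernoulli_poly m (g x) * dg).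
Proof.
  intros Hg. eapply is_derive_eq; [apply (is_derive_comp _ g), Hg; apply is_derive_bernoulli_poly|].
  simpl. unfold scal; simpl. unfold mult; simpl. ring.
Qed.

Lemma is_derive_0_const (f : R -> R) : (forall x, is_derive f x 0) -> forall x y, f x = f y.
Proof.
  intros Hf x y.
  destruct (Rtotal_order x y) as [Hxy | [-> | Hxy]]; [| reflexivity |symmetry];
    apply eq_is_derive; auto.
Qed.

Lemma is_derive_const_periodic (f : R -> R) c :
  (forall x, is_derive f x c) -> f 1 = f 0 -> c = 0.
Proof.
  intros Hf Hper.
  assert (Hg : forall x, is_derive (fun y => f y - c * y) x 0).
  { intros x. eapply is_derive_eq.
    - apply (is_derive_minus f (fun y => c * y)); [apply Hf | apply is_derive_scal, is_derive_id].
    - unfold minus, plus, opp, one; simpl. ring. }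
  pose proof (is_derive_0_const _ Hg 1 0). lra.
Qed.

Section AppellSequence.

Variable D : nat -> R -> R.
Hypothesis D_0 : forall x, D 0%nat x = 0.
Hypothesis is_derive_D : forall m x, is_derive (D (S m)) x (INR (S m) * D m x).

Lemma appell_eq0_of_root : (forall m, D (S m) 0 = 0) -> forall m x, D m x = 0.
Proof.
  intros Hroot m. induction m as [|m IH]; [exact D_0|]. intros x.
  rewrite <- (Hroot m). apply is_derive_0_const. intros y.
  eapply is_derive_eq; [apply is_derive_D|]. rewrite IH. ring.
Qed.

Lemma appell_eq0_of_periodic : (forall m x, D (S m) (x + 1) = D (S m) x) -> forall m x, D m x = 0.
Proof.
  intros Hper m. induction m as [|m IH]; [exact D_0|].
  assert (Hc : forall x, D (S m) x = D (S m) 0).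
  { intros x. apply is_derive_0_const. intros y.
    eapply is_derive_eq; [apply is_derive_D|]. rewrite IH. ring. }
  (* D_(m+2) has the constant derivative (m+2) D_(m+1)(0) and is periodic *)
  assert (H0 : INR (S (S m)) * D (S m) 0 = 0).
  { apply (is_derive_const_periodic (D (S (S m)))).
    - intros x. rewrite <- (Hc x). apply is_derive_D.
    - rewrite <- (Rplus_0_l 1). apply Hper. }
  intros x. rewrite Hc.
  apply Rmult_integral in H0 as [H0 | H0]; [|exact H0].
  contradict H0. apply not_0_INR. lia.
Qed.

End AppellSequence.

Lemma bernoulli_poly_shift m x :
  bernoulli_poly (S m) (x + 1) - bernoulli_poly (S m) x = INR (S m) * x ^ m.
Proof.
  pose (E := fun m x => bernoulli_poly m (x + 1) - bernoulli_poly m x - INR m * x ^ pred m).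
  enough (HE : E (S m) x = 0) by (unfold E in HE; simpl pred in HE; lra).
  apply appell_eq0_of_root; unfold E.
  - intros y. rewrite !bernoulli_poly_0. simpl. ring.
  - intros k y. eapply is_derive_eq.
    + apply (is_derive_minus (fun y => bernoulli_poly (S k) (y + 1) - bernoulli_poly (S k) y)).
      * apply (is_derive_minus (fun y => bernoulli_poly (S k) (y + 1))).
        -- apply (is_derive_bernoulli_poly_comp k (fun y => y + 1) y 1). now auto_derive.
        -- apply is_derive_bernoulli_poly.
      * apply is_derive_scal.
        apply (is_derive_pow (fun y => y) _ y 1 (is_derive_id y)).
    + unfold minus, plus, opp; simpl. ring.
  - intros k. rewrite Rplus_0_l, bernoulli_poly_at1. simpl pred. ring.
Qed.

Section Multiplication.

Variable a : nat.
Hypothesis a_pos : (0 < a)%nat.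

Definition bernoulli_mult_sum m x :=
  INR a ^ m / INR a * Rsum_list (seq 0 a) (fun k => bernoulli_poly m ((x + INR k) / INR a)).

Let INR_a_neq0 : INR a <> 0.
Proof. apply not_0_INR. lia. Qed.

Lemma bernoulli_mult_sum_0 x : bernoulli_mult_sum 0 x = 1.
Proof.
  unfold bernoulli_mult_sum.
  rewrite (Rsum_list_ext _ _ (fun _ => 1)) by (intros; apply bernoulli_poly_0).
  rewrite Rsum_list_seq_1. field. exact INR_a_neq0.
Qed.

Lemma is_derive_bernoulli_mult_sum m x :
  is_derive (bernoulli_mult_sum (S m)) x (INR (S m) * bernoulli_mult_sum m x).
Proof.
  unfold bernoulli_mult_sum. eapply is_derive_eq.
  - apply is_derive_scal.
    apply (is_derive_Rsum_list _ (fun k y => bernoulli_poly (S m) ((y + INR k) / INR a))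
      (fun k y => INR (S m) * bernoulli_poly m ((y + INR k) / INR a) * / INR a)).
    intros k.
    apply (is_derive_bernoulli_poly_comp m (fun y => (y + INR k) / INR a) x (/ INR a)).
    auto_derive; [exact I | field; exact INR_a_neq0].
  - rewrite (Rsum_list_ext _ _ (fun k => INR (S m) / INR a * bernoulli_poly m ((x + INR k) / INR a)))
      by (intros; unfold Rdiv; ring).
    rewrite Rsum_list_scal. simpl pow. field. exact INR_a_neq0.
Qed.

Lemma bernoulli_mult_sum_shift m x :
  bernoulli_mult_sum (S m) (x + 1) - bernoulli_mult_sum (S m) x = INR (S m) * x ^ m.
Proof.
  unfold bernoulli_mult_sum.
  set (h := fun k => bernoulli_poly (S m) ((x + INR k) / INR a)).
  rewrite (Rsum_list_ext _ _ (fun k => h (S k)))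
    by (intros k; unfold h; rewrite S_INR; f_equal; f_equal; ring).
  rewrite <- Rmult_minus_distr_l, Rsum_list_seq_telescope. unfold h.
  replace ((x + INR a) / INR a) with (x / INR a + 1) by (field; exact INR_a_neq0).
  replace ((x + INR 0) / INR a) with (x / INR a) by (simpl; field; exact INR_a_neq0).
  rewrite bernoulli_poly_shift. unfold Rdiv. rewrite Rpow_mult_distr, pow_inv.
  simpl pow. field. split; [apply pow_nonzero|]; exact INR_a_neq0.
Qed.

Lemma bernoulli_mult_sum_eq m x : bernoulli_mult_sum m x = bernoulli_poly m x.
Proof.
  apply Rminus_diag_uniq.
  apply (appell_eq0_of_periodic (fun m x => bernoulli_mult_sum m x - bernoulli_poly m x)).
  - intros y. rewrite bernoulli_mult_sum_0, bernoulli_poly_0. ring.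
  - intros k y. eapply is_derive_eq.
    + apply (is_derive_minus (bernoulli_mult_sum (S k)) (bernoulli_poly (S k))).
      * apply is_derive_bernoulli_mult_sum.
      * apply is_derive_bernoulli_poly.
    + unfold minus, plus, opp; simpl. ring.
  - intros k y. pose proof (bernoulli_mult_sum_shift k y). pose proof (bernoulli_poly_shift k y).
    lra.
Qed.

End Multiplication.

Lemma Cminus_neq0 (u v : C) : u <> v -> (u - v)%C <> RtoC 0.
Proof. intros Huv H. apply Huv. replace u with (u - v + v)%C by ring. rewrite H. ring. Qed.

Lemma Cexp_add u v : Cexp (u + v) = (Cexp u * Cexp v)%C.
Proof.
  destruct u as [u1 u2], v as [v1 v2]. unfold Cexp, Re, Im; simpl.
  rewrite exp_plus, cos_plus, sin_plus. apply injective_projections; simpl; ring.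
Qed.

Lemma Cexp_INR_add m n z :
  Cexp (RtoC (INR (m + n)) * z) = (Cexp (RtoC (INR m) * z) * Cexp (RtoC (INR n) * z))%C.
Proof. rewrite plus_INR, RtoC_plus, Cmult_plus_distr_r. apply Cexp_add. Qed.

Lemma Cexp_INR_0 z : Cexp (RtoC (INR 0) * z) = RtoC 1.
Proof.
  destruct z as [x y]. unfold Cexp, Re, Im; simpl.
  rewrite !Rmult_0_l, Rminus_0_r, Rplus_0_r, exp_0, cos_0, sin_0.
  apply injective_projections; simpl; ring.
Qed.

Lemma Cexp_INR_1 z : Cexp (RtoC (INR 1) * z) = Cexp z.
Proof. simpl INR. rewrite Cmult_1_l. reflexivity. Qed.

Lemma Cexp_INR_eq1 n z : Cexp z = RtoC 1 -> Cexp (RtoC (INR n) * z) = RtoC 1.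
Proof.
  intros Hz. induction n as [|n IH]; [apply Cexp_INR_0|].
  rewrite <- Nat.add_1_r, Cexp_INR_add, IH, Cexp_INR_1, Hz. ring.
Qed.

Lemma Cexp_geometric_sum a z :
  ((Cexp z - RtoC 1) * Csum_list (seq 0 a) (fun n => Cexp (RtoC (INR n) * z)))%C =
  (Cexp (RtoC (INR a) * z) - RtoC 1)%C.
Proof.
  induction a as [|a IH].
  - rewrite Cexp_INR_0. simpl. ring.
  - rewrite seq_S, Csum_list_app, <- Nat.add_1_r, Cexp_INR_add, Cexp_INR_1.
    simpl. rewrite Cmult_plus_distr_l, IH. ring.
Qed.

Section Apery.

Variables (as_ : list nat) (a : nat).
Hypothesis a_pos : (0 < a)%nat.
Hypothesis a_rep : representable as_ a.

Lemma Nset0_or_NRset_iff n :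
  Nset0 as_ a n \/ NRset as_ n <-> (n < a)%nat \/ ((a <= n)%nat /\ NRset as_ (n - a)).
Proof.
  unfold Nset0. rewrite !NRset_iff.
  assert (H0 := representable_0 as_).
  assert (Hshift : (a <= n)%nat -> representable as_ (n - a) -> representable as_ n).
  { intros Han Hr. replace n with (n - a + a)%nat by lia. apply representable_add; assumption. }
  destruct (classic (representable as_ n)) as [Hn|Hn];
    destruct (classic (representable as_ (n - a))) as [Hna|Hna];
    destruct (Nat.lt_ge_cases n a); destruct (Nat.eq_dec n 0) as [->|];
    intuition (try lia).
Qed.

Lemma Nset0_lt N n :
  (forall k, (N <= k)%nat -> representable as_ k) -> Nset0 as_ a n -> (n < N + a)%nat.
Proof.
  intros HN [->|[_ [_ Hn]]]; [lia|]. destruct (Nat.lt_ge_cases n (N + a)) as [H|H]; [exact H|].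
  contradict Hn. split; [lia | apply HN; lia].
Qed.

Lemma Nset0_not_NRset n : Nset0 as_ a n -> ~ NRset as_ n.
Proof.
  rewrite NRset_iff. intros [->|[_ [Hn _]]] HNR; apply HNR; [apply representable_0 | exact Hn].
Qed.

Lemma Nset0_NRset_Permutation lN0 lNR :
  enumerates lN0 (Nset0 as_ a) -> enumerates lNR (NRset as_) ->
  Permutation (lN0 ++ lNR) (seq 0 a ++ map (fun n => n + a)%nat lNR).
Proof.
  intros [HN0 HinN0] [HNR HinNR]. apply NoDup_Permutation.
  - apply NoDup_app; [exact HN0 | exact HNR|].
    intros n H0 HR. apply (Nset0_not_NRset n); [apply HinN0, H0 | apply HinNR, HR].
  - apply NoDup_app; [apply seq_NoDup | |].
    + apply FinFun.Injective_map_NoDup; [intros m n; lia | exact HNR].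
    + intros n Hn Hshift. apply in_seq in Hn. apply in_map_iff in Hshift as [m [<- _]]. lia.
  - intros n. rewrite !in_app_iff, HinN0, HinNR, in_seq, in_map_iff, Nset0_or_NRset_iff.
    split.
    + intros [Hn | [Han Hn]]; [left; lia|]. right. exists (n - a)%nat.
      split; [lia | apply HinNR, Hn].
    + intros [Hn | [m [<- Hm]]]; [left; lia|]. right.
      replace (m + a - a)%nat with m by lia. split; [lia | apply HinNR, Hm].
Qed.

Lemma Rsum_list_Nset0_NRset lN0 lNR f :
  enumerates lN0 (Nset0 as_ a) -> enumerates lNR (NRset as_) ->
  Rsum_list lN0 f + Rsum_list lNR f =
  Rsum_list (seq 0 a) f + Rsum_list lNR (fun n => f (n + a)%nat).
Proof.
  intros HN0 HNR. rewrite <- (Rsum_list_map lNR (fun n => n + a)%nat f), <- !Rsum_list_app.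
  apply Rsum_list_Permutation, Nset0_NRset_Permutation; assumption.
Qed.

Lemma Csum_list_Nset0_NRset lN0 lNR f :
  enumerates lN0 (Nset0 as_ a) -> enumerates lNR (NRset as_) ->
  (Csum_list lN0 f + Csum_list lNR f =
   Csum_list (seq 0 a) f + Csum_list lNR (fun n => f (n + a)%nat))%C.
Proof.
  intros HN0 HNR. rewrite <- (Csum_list_map lNR (fun n => n + a)%nat f), <- !Csum_list_app.
  apply Csum_list_Permutation, Nset0_NRset_Permutation; assumption.
Qed.

Lemma Csum_list_NRset_exp lN0 lNR z :
  enumerates lN0 (Nset0 as_ a) -> enumerates lNR (NRset as_) ->
  Cexp (RtoC (INR a) * z) <> RtoC 1 ->
  Csum_list lNR (fun n => Cexp (RtoC (INR n) * z)) =
  Cminus (Cmult (Cinv (Cminus (Cexp (RtoC (INR a) * z)) (RtoC 1)))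
                (Csum_list lN0 (fun n => Cexp (RtoC (INR n) * z))))
         (Cinv (Cminus (Cexp z) (RtoC 1))).
Proof.
  intros HN0 HNR Hy.
  assert (Hx : Cexp z <> RtoC 1) by (intros Hx; apply Hy, Cexp_INR_eq1, Hx).
  pose proof (Csum_list_Nset0_NRset lN0 lNR (fun n => Cexp (RtoC (INR n) * z)) HN0 HNR)
    as Hsplit.
  cbv beta in Hsplit.
  rewrite (Csum_list_ext lNR (fun n => Cexp (RtoC (INR (n + a)) * z))
      (fun n => Cexp (RtoC (INR a) * z) * Cexp (RtoC (INR n) * z))%C),
    Csum_list_scal in Hsplit by (intros n; rewrite Cexp_INR_add; apply Cmult_comm).
  pose proof (Cexp_geometric_sum a z) as Hgeom.
  set (x := Cexp z) in *. set (y := Cexp (RtoC (INR a) * z)) in *.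
  set (N := Csum_list lN0 _) in *. set (P := Csum_list lNR _) in *.
  set (G := Csum_list (seq 0 a) _) in *.
  apply Cminus_neq0 in Hx, Hy.
  replace N with (G + y * P - P)%C by (rewrite <- Hsplit; ring).
  replace G with ((y - RtoC 1) / (x - RtoC 1))%C by (rewrite <- Hgeom; field; exact Hx).
  field. split; assumption.
Qed.

Lemma Rsum_list_NRset_pow lN0 lNR m :
  enumerates lN0 (Nset0 as_ a) -> enumerates lNR (NRset as_) ->
  INR (S m) * Rsum_list lNR (fun n => INR n ^ m) =
  INR a ^ m * Rsum_list lN0 (fun n => bernoulli_poly (S m) (INR n / INR a)) - bernoulli (S m).
Proof.
  intros HN0 HNR.
  assert (Ha : INR a <> 0) by (apply not_0_INR; lia).
  assert (Ham : INR a ^ m <> 0) by (apply pow_nonzero, Ha).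
  pose proof (Rsum_list_Nset0_NRset lN0 lNR (fun n => bernoulli_poly (S m) (INR n / INR a))
    HN0 HNR) as Hsplit.
  cbv beta in Hsplit.
  rewrite (Rsum_list_ext lNR (fun n => bernoulli_poly (S m) (INR (n + a) / INR a))
      (fun n => bernoulli_poly (S m) (INR n / INR a) + INR (S m) / INR a ^ m * INR n ^ m)),
    Rsum_list_plus, Rsum_list_scal in Hsplit.
  2:{ intros n. rewrite plus_INR.
      replace ((INR n + INR a) / INR a) with (INR n / INR a + 1) by (field; exact Ha).
      pose proof (bernoulli_poly_shift m (INR n / INR a)) as Hshift.
      unfold Rdiv in *. rewrite Rpow_mult_distr, pow_inv in Hshift. lra. }
  pose proof (bernoulli_mult_sum_eq a a_pos (S m) 0) as Hmult.
  unfold bernoulli_mult_sum in Hmult. rewrite bernoulli_poly_at0 in Hmult.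
  rewrite (Rsum_list_ext _ _ (fun k => bernoulli_poly (S m) (INR k / INR a))) in Hmult
    by (intros; rewrite Rplus_0_l; reflexivity).
  rewrite <- Hmult. simpl pow.
  set (G := Rsum_list (seq 0 a) _) in *. set (N := Rsum_list lN0 _) in *.
  set (P := Rsum_list lNR (fun n => bernoulli_poly (S m) _)) in *.
  set (V := Rsum_list lNR (fun n => INR n ^ m)) in *.
  replace N with (G + INR (S m) / INR a ^ m * V) by lra.
  field. split; assumption.
Qed.

End Apery.

Theorem mainTheorem2 (as_ : list nat) (a : nat) :
  List.Forall (fun ai => (0 < ai)%nat) as_ ->
  gcd_list as_ = 1%nat ->
  In a as_ ->
  (exists lNR, enumerates lNR (NRset as_)) /\
  (exists lN0, enumerates lN0 (Nset0 as_ a)) /\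
  forall lNR lN0, enumerates lNR (NRset as_) -> enumerates lN0 (Nset0 as_ a) ->
    (forall z : C, z <> RtoC 0 -> Cexp (RtoC (INR a) * z) <> RtoC 1 ->
       Csum_list lNR (fun n => Cexp (RtoC (INR n) * z)) =
       Cminus (Cmult (Cinv (Cminus (Cexp (RtoC (INR a) * z)) (RtoC 1)))
                     (Csum_list lN0 (fun n => Cexp (RtoC (INR n) * z))))
              (Cinv (Cminus (Cexp z) (RtoC 1)))) /\
    (forall m : nat, (1 <= m)%nat ->
       (INR m * Rsum_list lNR (fun n => INR n ^ (m - 1)) =
        INR a ^ (m - 1) * Rsum_list lN0 (fun n => bernoulli_poly m (INR n / INR a))
        - bernoulli m)%R).
Proof.
  intros Hpos Hgcd Ha.
  assert (a_pos : (0 < a)%nat) by (rewrite Forall_forall in Hpos; apply Hpos, Ha).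
  assert (a_rep : representable as_ a) by (apply representable_In, Ha).
  destruct (representable_large as_ Hgcd) as [N HN].
  split; [|split].
  - apply (enumerates_bounded _ N). intros n. apply (NRset_lt as_ N n HN).
  - apply (enumerates_bounded _ (N + a)). intros n. apply (Nset0_lt as_ a a_pos N n HN).
  - intros lNR lN0 HNR HN0. split.
    + intros z _. apply (Csum_list_NRset_exp as_ a a_pos a_rep); assumption.
    + intros [|m] Hm; [lia|]. rewrite Nat.sub_1_r. apply (Rsum_list_NRset_pow as_ a a_pos a_rep); assumption.
Qed.
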